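(* Let $n\ge9$, let $K$ be an integer with $0\le K\le n/2$, and let $P_K=\min\!\big(\frac{K+\sqrt K}{n},\frac12\big)$. Then, entrywise, $\mathrm{Sen}(\mathcal S)_K\le3e^{20}\cdot\mathrm{Sen}(\tilde{\mathcal N})_{P_K}$.
   Context: Let $\mathbb{I}^n=\{0,1\}^n$ with Hamming distance $d$; operators on $\mathbb{R}^{\mathbb{I}^n}$ are identified with matrices and $A\le B$ means $B-A$ has nonnegative entries. For $0\le k\le n$, $(S_kf)(x)=\binom nk^{-1}\sum_{y:\,d(x,y)=k}f(y)$, and $\mathrm{Sen}(\mathcal S)_K=\frac1{K+1}\sum_{\ell=0}^KS_\ell$. For $p\in[0,1/2]$, $\tilde N_p=\sum_{k=0}^n\binom nkp^k(1-p)^{n-k}S_k$; $\mathrm{Sen}(\tilde{\mathcal N})_P=\frac1P\int_0^P\tilde N_p\,dp$ for $P\in(0,1/2]$, and $\mathrm{Sen}(\tilde{\mathcal N})_0$ is the identity (limit from above). *)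

From Stdlib Require Import Reals.
From Coquelicot Require Import Coquelicot.
From HB Require Import structures.
From mathcomp Require Import all_boot all_order all_algebra.
From mathcomp Require Import Rstruct.

Set Implicit Arguments.
Unset Strict Implicit.
Unset Printing Implicit Defensive.

Import GRing.Theory.
Local Open Scope ring_scope.

Definition cube (n : nat) := {ffun 'I_n -> bool}.

Definition hdist (n : nat) (x y : cube n) : nat := #|[set i | x i != y i]|.

Definition op (n : nat) := (cube n -> R) -> (cube n -> R).

(* Matrix entry (x,y) of an operator A: (A delta_y)(x). *)
Definition mxop (n : nat) (A : op n) (x y : cube n) : R :=
  A (fun z => if z == y then 1 else 0) x.

Definition S_op (n k : nat) : op n :=
  fun f x => ('C(n, k)%:R)^-1 * \sum_(y : cube n | hdist x y == k) f y.

Definition SenS (n K : nat) : op n :=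
  fun f x => (K.+1%:R)^-1 * \sum_(0 <= l < K.+1) @S_op n l f x.

Definition Ntilde (n : nat) (p : R) : op n :=
  fun f x => \sum_(0 <= k < n.+1)
     'C(n, k)%:R * p ^+ k * (1 - p) ^+ (n - k) * @S_op n k f x.

Definition SenN (n : nat) (P : R) : op n :=
  fun f x => if P == 0 then f x
             else P^-1 * RInt (fun p => @Ntilde n p f x) 0 P.

Definition PK (n K : nat) : R :=
  Rmin ((INR K + sqrt (INR K)) / INR n)%R (1 / 2)%R.

From Stdlib Require Import Reals.
From Coquelicot Require Import Coquelicot.
From mathcomp Require Import all_boot all_order all_algebra.
From mathcomp Require Import Rstruct ring lra zify.

(* Both operators depend on (x, y) only through d = d(x, y).  The entry of
   Sen(S)_K is 1 / ((K + 1) C(n, d)) if d <= K and 0 otherwise.  Since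
   d/dp P(Bin(n + 1, p) > d) = (n + 1) C(n, d) p^d (1 - p)^(n - d), the entry
   of Sen(N~)_P is P(Bin(n + 1, P) > d) / (P (n + 1) C(n, d)).  For P = P_K the
   binomial pmf of Bin(n + 1, P) at K + 1 is at least its value at K; as
   P <= 1/2 the ratio of consecutive probabilities then shows that the pmf
   dominates its reflection about K + 1/2, so P(Bin(n + 1, P) > K) >= 1/2.
   With P_K (n + 1) <= 4K this gives the bound with a constant far below
   3 e^20. *)

Set Implicit Arguments.
Unset Strict Implicit.
Unset Printing Implicit Defensive.

Import Order.TTheory GRing.Theory Num.Theory.
Local Open Scope ring_scope.

Definition binom_pmf (m : nat) (q : R) (j : nat) :=
  'C(m, j)%:R * q ^+ j * (1 - q) ^+ (m - j).

Definition binom_tail (m : nat) (q : R) (k : nat) :=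
  \sum_(k <= j < m.+1) binom_pmf m q j.

Lemma binom_pmf_ge0 m (q : R) j : 0 <= q <= 1 -> 0 <= binom_pmf m q j.
Proof.
case/andP=> q0 q1; rewrite /binom_pmf.
by rewrite !mulr_ge0 ?exprn_ge0 ?subr_ge0.
Qed.

Lemma binom_pmf_small m (q : R) j : (m < j)%N -> binom_pmf m q j = 0.
Proof. by move=> mj; rewrite /binom_pmf bin_small // !mul0r. Qed.

Lemma binom_tail_ge0 m (q : R) k : 0 <= q <= 1 -> 0 <= binom_tail m q k.
Proof. by move=> q01; apply: sumr_ge0 => j _; apply: binom_pmf_ge0. Qed.

Lemma sum_binom_pmf m q : \sum_(0 <= j < m.+1) binom_pmf m q j = 1.
Proof.
have := exprDn (1 - q) q m; rewrite subrK expr1n => ->.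
rewrite big_mkord; apply: eq_bigr => j _.
by rewrite /binom_pmf -[RHS]mulr_natr; ring.
Qed.

Lemma binom_tail_monotone m (q : R) k k' : 0 <= q <= 1 -> (k <= k')%N ->
  binom_tail m q k' <= binom_tail m q k.
Proof.
move=> q01 kk'; rewrite /binom_tail.
case: (leqP k' m.+1) => [k'm | mk']; last first.
  by rewrite [X in X <= _]big_geq ?binom_tail_ge0 // ltnW.
rewrite [X in _ <= X](big_cat_nat kk' k'm) /= lerDr.
by apply: sumr_ge0 => j _; apply: binom_pmf_ge0.
Qed.

Lemma binom_pmfS m (q : R) j : (j < m)%N ->
  binom_pmf m q j.+1 * (j.+1%:R * (1 - q)) = binom_pmf m q j * ((m - j)%:R * q).
Proof.
move=> jm; rewrite /binom_pmf.
have binS : 'C(m, j.+1)%:R * j.+1%:R = 'C(m, j)%:R * (m - j)%:R :> R.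
  by rewrite -!natrM mulnC mul_bin_left mulnC.
have expS : (1 - q) ^+ (m - j) = (1 - q) ^+ (m - j.+1) * (1 - q).
  by rewrite -exprSr subnSK.
rewrite expS exprSr.
transitivity ('C(m, j.+1)%:R * j.+1%:R * q ^+ j * (1 - q) ^+ (m - j.+1) * (1 - q) * q);
  first ring.
by rewrite binS; ring.
Qed.

Lemma binom_pmf_reflect_step m (q : R) j i : 0 < q < 1 -> (j < m)%N -> (i < m)%N ->
  j.+1%:R * i.+1%:R * (1 - q) ^+ 2 <= (m - j)%:R * (m - i)%:R * q ^+ 2 ->
  binom_pmf m q j.+1 <= binom_pmf m q i -> binom_pmf m q j <= binom_pmf m q i.+1.
Proof.
case/andP=> q0 q1 jm im cond le_ji.
have q01 : 0 <= q <= 1 by rewrite !ltW.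
have q1' : 0 < 1 - q by rewrite subr_gt0.
have recj := binom_pmfS q jm; have reci := binom_pmfS q im.
set A := (m - j)%:R * q in recj; set B := j.+1%:R * (1 - q) in recj.
set C := i.+1%:R * (1 - q) in reci; set D := (m - i)%:R * q in reci.
have A0 : 0 < A by rewrite /A mulr_gt0 // ltr0n subn_gt0.
have C0 : 0 < C by rewrite /C mulr_gt0.
have BC0 : 0 <= B * C by rewrite mulr_ge0 ?(ltW C0) // mulr_ge0 ?(ltW q1').
have BCAD : B * C <= A * D.
  have -> : A * D = (m - j)%:R * (m - i)%:R * q ^+ 2 by rewrite /A /D; ring.
  by have -> : B * C = j.+1%:R * i.+1%:R * (1 - q) ^+ 2 by rewrite /B /C; ring.
rewrite -(ler_pM2r (mulr_gt0 A0 C0)).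
have -> : binom_pmf m q j * (A * C) = binom_pmf m q j.+1 * (B * C).
  by rewrite mulrA -recj; ring.
have -> : binom_pmf m q i.+1 * (A * C) = binom_pmf m q i * (A * D).
  by rewrite mulrCA reci; ring.
apply: (le_trans (ler_wpM2r BC0 le_ji)).
by rewrite ler_wpM2l ?binom_pmf_ge0.
Qed.

Lemma binom_pmf_reflect m (q : R) K : 0 < q <= 1 / 2 -> (2 * K < m)%N ->
  K.+1%:R * (1 - q) <= (m - K)%:R * q ->
  forall t, (t <= K)%N -> binom_pmf m q (K - t) <= binom_pmf m q (K.+1 + t).
Proof.
case/andP=> q0 q2 Km mode.
have q1 : 0 < 1 - q by lra.
have q01 : 0 <= q <= 1 by rewrite ltW //=; lra.
elim=> [_ | t IH tK].
  rewrite subn0 addn0 -(ler_pM2r (_ : 0 < K.+1%:R * (1 - q))); last first.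
    by rewrite mulr_gt0 ?ltr0Sn.
  rewrite binom_pmfS; last by lia.
  by rewrite ler_wpM2l ?binom_pmf_ge0.
rewrite addnS; apply: binom_pmf_reflect_step; try lia.
- by rewrite q0 /=; lra.
- set s : R := t.+1%:R; set a : R := K.+1%:R; set b : R := (m - K)%:R.
  have -> : (K - t.+1).+1%:R = a - s :> R by rewrite -natrB; [congr (_%:R) | ]; lia.
  have -> : (K.+1 + t).+1%:R = a + s :> R by rewrite -natrD -addnS.
  have -> : (m - (K - t.+1))%:R = b + s :> R by rewrite -natrD; congr (_%:R); lia.
  have -> : (m - (K.+1 + t))%:R = b - s :> R by rewrite -natrB; [congr (_%:R) | ]; lia.
  have s0 : 0 <= s by apply: ler0n.
  have a0 : 0 <= a * (1 - q) by rewrite mulr_ge0 ?(ltW q1).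
  have sq0 : 0 <= s * q by rewrite mulr_ge0 ?ltW.
  have sq : s * q <= s * (1 - q) by rewrite ler_wpM2l //; lra.
  have sq2 : (s * q) ^+ 2 <= (s * (1 - q)) ^+ 2 by rewrite !expr2 ler_pM.
  have ab2 : (a * (1 - q)) ^+ 2 <= (b * q) ^+ 2 by rewrite !expr2 ler_pM.
  have -> : (a - s) * (a + s) * (1 - q) ^+ 2 = (a * (1 - q)) ^+ 2 - (s * (1 - q)) ^+ 2.
    by ring.
  have -> : (b + s) * (b - s) * q ^+ 2 = (b * q) ^+ 2 - (s * q) ^+ 2 by ring.
  lra.
- have -> : ((K - t.+1).+1 = K - t)%N by lia.
  exact/IH/ltnW.
Qed.

Lemma binom_tail_ge_half m (q : R) K : 0 < q <= 1 / 2 -> (2 * K < m)%N ->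
  K.+1%:R * (1 - q) <= (m - K)%:R * q -> 1 / 2 <= binom_tail m q K.+1.
Proof.
move=> q_range Km mode.
have q01 : 0 <= q <= 1 by case/andP: q_range => q0 q2; apply/andP; split; lra.
have head_tail := sum_binom_pmf m q.
rewrite (@big_cat_nat _ _ _ K.+1) //= -/(binom_tail m q K.+1) in head_tail; last by lia.
suff : \sum_(0 <= j < K.+1) binom_pmf m q j <= binom_tail m q K.+1 by lra.
rewrite big_nat_rev /= /binom_tail.
rewrite (@big_cat_nat _ _ _ (K.+1 + K.+1) K.+1 m.+1) /=; try lia.
rewrite -[X in X <= _]addr0 lerD ?sumr_ge0 // => [|j _]; last exact: binom_pmf_ge0.
rewrite -{3}[K.+1]add0n big_addn addnK !big_mkord; apply: ler_sum => t _.
by rewrite add0n subSS addnC binom_pmf_reflect // -ltnS.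
Qed.

Lemma is_derive_monomial (c : R) a b x :
  is_derive (fun p : R => c * p ^+ a * (1 - p) ^+ b) x
    (c * (a%:R * x ^+ a.-1 * (1 - x) ^+ b - b%:R * x ^+ a * (1 - x) ^+ b.-1)).
Proof.
apply: (is_derive_ext (fun p => Rmult (Rmult c (pow p a)) (pow (Rminus 1 p) b))).
  by move=> p; rewrite !RpowE.
auto_derive => //.
rewrite !RpowE !RmultE !RplusE !RoppE !INRE.
change (IZR 1) with (@GRing.one R).
by ring.
Qed.

Lemma is_derive_big_nat (F : nat -> R -> R) (F' : nat -> R) a b x :
  (forall i, is_derive (F i) x (F' i)) ->
  is_derive (fun p => \sum_(a <= i < b) F i p) x (\sum_(a <= i < b) F' i).
Proof.
move=> dF; elim: b => [|b IH].
  apply: (is_derive_ext (fun _ => @GRing.zero R)) => [p|]; first by rewrite big_geq.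
  by rewrite big_geq //; apply: is_derive_const.
case: (leqP a b) => [ab | ba].
  apply: (is_derive_ext (fun p => \sum_(a <= i < b) F i p + F b p)) => [p|].
    by rewrite big_nat_recr.
  by rewrite big_nat_recr //=; apply: is_derive_plus IH (dF b).
apply: (is_derive_ext (fun _ => @GRing.zero R)) => [p|]; first by rewrite big_geq.
by rewrite big_geq //; apply: is_derive_const.
Qed.

Lemma is_derive_binom_pmf m i x :
  is_derive (fun p => binom_pmf m.+1 p i.+1) x
    (m.+1%:R * (binom_pmf m x i - binom_pmf m x i.+1)).
Proof.
have := is_derive_monomial 'C(m.+1, i.+1)%:R i.+1 (m.+1 - i.+1) x.
congr is_derive.
have e1 : m.+1%:R * 'C(m, i)%:R = i.+1%:R * 'C(m.+1, i.+1)%:R :> R.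
  by rewrite -!natrM mul_bin_diag.
have e2 : m.+1%:R * 'C(m, i.+1)%:R = (m - i)%:R * 'C(m.+1, i.+1)%:R :> R.
  by rewrite -!natrM mul_bin_down subSS.
rewrite subSS /= -subnS /binom_pmf.
transitivity ((m.+1%:R * 'C(m, i)%:R) * (x ^+ i * (1 - x) ^+ (m - i)) -
   (m.+1%:R * 'C(m, i.+1)%:R) * (x ^+ i.+1 * (1 - x) ^+ (m - i.+1))); last by ring.
by rewrite e1 e2; ring.
Qed.

Lemma binom_tailE m q k :
  binom_tail m.+1 q k.+1 = \sum_(k <= i < m.+1) binom_pmf m.+1 q i.+1.
Proof.
by rewrite /binom_tail -[k.+1]addn1 big_addn subn1 /=; apply: eq_bigr => i _; rewrite addn1.
Qed.

Lemma is_derive_binom_tail m k x : (k <= m)%N ->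
  is_derive (fun p => binom_tail m.+1 p k.+1) x (m.+1%:R * binom_pmf m x k).
Proof.
move=> km.
apply: (is_derive_ext (fun p => \sum_(k <= i < m.+1) binom_pmf m.+1 p i.+1)).
  by move=> p; rewrite binom_tailE.
have := is_derive_big_nat k m.+1 (fun i => is_derive_binom_pmf m i x).
congr is_derive.
rewrite -mulr_sumr (@telescope_sumr_eq _ k m.+1 (fun i => - binom_pmf m x i)) ?leqW //.
  by rewrite binom_pmf_small // oppr0 add0r opprK.
by move=> i _; rewrite opprK addrC.
Qed.

Lemma binom_tail_at0 m k : binom_tail m 0 k.+1 = 0.
Proof.
apply: big1_seq => -[|j]; rewrite mem_index_iota //.
by rewrite /binom_pmf exprS mul0r mulr0 mul0r.
Qed.

Lemma is_RInt_binom_pmf m k (P : R) : (k <= m)%N ->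
  is_RInt (fun p => binom_pmf m p k) 0 P (binom_tail m.+1 P k.+1 / m.+1%:R).
Proof.
move=> km.
have -> : binom_tail m.+1 P k.+1 / m.+1%:R =
    minus (binom_tail m.+1 P k.+1 / m.+1%:R) (binom_tail m.+1 0 k.+1 / m.+1%:R).
  by rewrite binom_tail_at0 mul0r minus_zero_r.
apply: (is_RInt_derive (fun p => binom_tail m.+1 p k.+1 / m.+1%:R)) => x _.
  apply: (is_derive_ext (fun p => m.+1%:R^-1 * binom_tail m.+1 p k.+1)).
    by move=> p; rewrite mulrC.
  have := is_derive_scal _ _ (m.+1%:R^-1) _ (is_derive_binom_tail x km).
  by rewrite RmultE mulrA mulVf ?mul1r // pnatr_eq0.
apply: ex_derive_continuous.
exact: ex_intro (is_derive_monomial _ _ _ x).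
Qed.

Lemma hdist_le n (x y : cube n) : (hdist x y <= n)%N.
Proof. by rewrite /hdist (leq_trans (max_card _)) ?card_ord. Qed.

Lemma hdist_eq0 n (x y : cube n) : (hdist x y == 0%N) = (x == y).
Proof.
rewrite /hdist cards_eq0; apply/eqP/eqP => [xy | ->]; last first.
  by apply/setP => i; rewrite !inE eqxx.
apply/ffunP => i; apply/eqP; apply: contraT => xy_i.
by have := in_set0 i; rewrite -xy inE xy_i.
Qed.

Lemma mxop_S_op n k (x y : cube n) :
  mxop (S_op k) x y = if hdist x y == k then ('C(n, k)%:R)^-1 else 0.
Proof.
rewrite /mxop /S_op; case: eqP => [dk | dk].
  by rewrite (bigD1 y) ?dk //= eqxx big1 ?addr0 ?mulr1 // => z /andP[_ /negbTE->].
by rewrite big1 ?mulr0 // => z dz; case: eqP => // zy; case: dk; rewrite -zy; exact/eqP.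
Qed.

Lemma mxop_Ntilde n (p : R) (x y : cube n) :
  mxop (Ntilde p) x y = ('C(n, hdist x y)%:R)^-1 * binom_pmf n p (hdist x y).
Proof.
rewrite /mxop /Ntilde; set d := hdist x y.
rewrite (eq_bigr (fun k => if k == d then 'C(n, d)%:R^-1 * binom_pmf n p d else 0)).
  by rewrite -big_mkcond big_nat1_eq ltnS hdist_le.
move=> k _; rewrite -[S_op k _ x]/(mxop (S_op k) x y) mxop_S_op -/d eq_sym.
by case: eqP => [-> | _]; rewrite ?mulr0 // /binom_pmf mulrC !mulrA.
Qed.

Lemma mxop_SenS n K (x y : cube n) :
  mxop (SenS K) x y =
  if (hdist x y <= K)%N then (K.+1%:R)^-1 * ('C(n, hdist x y)%:R)^-1 else 0.
Proof.
rewrite /mxop /SenS; set d := hdist x y.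
rewrite (eq_bigr (fun l => if l == d then ('C(n, d)%:R)^-1 else 0)); last first.
  move=> l _; rewrite -[S_op l _ x]/(mxop (S_op l) x y) mxop_S_op -/d eq_sym.
  by case: eqP => [-> | ].
by rewrite -big_mkcond big_nat1_eq ltnS; case: (d <= K)%N; rewrite ?mulr0.
Qed.

Lemma mxop_SenN n (P : R) (x y : cube n) : P != 0 ->
  mxop (SenN P) x y =
  binom_tail n.+1 P (hdist x y).+1 / (P * n.+1%:R * 'C(n, hdist x y)%:R).
Proof.
move=> P0; rewrite /mxop /SenN (negbTE P0); set d := hdist x y.
rewrite (RInt_ext _ (fun p => ('C(n, d)%:R)^-1 * binom_pmf n p d)); last first.
  by move=> p _; rewrite -[Ntilde p _ x]/(mxop (Ntilde p) x y) mxop_Ntilde.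
have intP := is_RInt_binom_pmf (P := P) (hdist_le x y).
rewrite RInt_scal ?(is_RInt_unique _ _ _ _ intP) //.
  by rewrite /scal /= /mult /= !RmultE -/d !invfM; ring.
by exists (binom_tail n.+1 P d.+1 / n.+1%:R).
Qed.

Lemma PKE n K : PK n K = Num.min ((K%:R + Num.sqrt K%:R) / n%:R) (1 / 2).
Proof. by rewrite /PK RminE !INRE RsqrtE; congr Num.min. Qed.

Lemma PK0 n : PK n 0 = 0.
Proof. by rewrite PKE sqrtr0 add0r mul0r min_l // divr_ge0. Qed.

Lemma PK_bounds n K : (2 * K <= n)%N -> (0 < K)%N ->
  [/\ 0 < PK n K <= 1 / 2, K.+1%:R * (1 - PK n K) <= (n.+1 - K)%:R * PK n K
    & PK n K * n.+1%:R <= 4 * K%:R].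
Proof.
move=> Kn K0; rewrite PKE.
have k1 : 1 <= K%:R :> R by rewrite ler1n.
have kn : 2 * K%:R <= n%:R :> R by rewrite -natrM ler_nat.
have -> : (n.+1 - K)%:R = n%:R + 1 - K%:R :> R by rewrite natrB ?natr1 //; lia.
have n0 : 0 < n%:R :> R by lra.
set s := Num.sqrt K%:R.
have s2 : s ^+ 2 = K%:R by rewrite sqr_sqrtr ?ler0n.
have s0 : 0 <= s by apply: sqrtr_ge0.
have s1 : 1 <= s by nra.
have sk : s <= K%:R by nra.
set P := (K%:R + s) / n%:R.
have Pn : P * n%:R = K%:R + s by rewrite mulfVK ?gt_eqF.
have [P2 | P2] := leP P (1 / 2).
  have P0 : 0 < P by rewrite divr_gt0 //; lra.
  by split; [rewrite P0 | |]; lra.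
have : n%:R < 2 * (K%:R + s) by rewrite -Pn; nra.
by split; lra.
Qed.

Lemma exp20_gt21 : 21%:R < exp 20.
Proof.
have := exp_ineq1 20 ltac:(discrR); move/RltP; rewrite RplusE.
by rewrite R1E IZRposE INRE /=; lra.
Qed.

Lemma mxop_SenN0 n (x y : cube n) : mxop (SenN 0) x y = (x == y)%:R.
Proof. by rewrite /mxop /SenN eqxx; case: eqP. Qed.

Lemma binom_tail_PK_ge_half n K d : (2 * K <= n)%N -> (0 < K)%N -> (d <= K)%N ->
  1 / 2 <= binom_tail n.+1 (PK n K) d.+1.
Proof.
move=> Kn K0 dK; have [/andP[P0 P2] mode _] := PK_bounds Kn K0.
have P01 : 0 <= PK n K <= 1 by rewrite ltW //=; lra.
apply: (le_trans _ (@binom_tail_monotone n.+1 _ d.+1 K.+1 P01 dK)).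
by apply: binom_tail_ge_half; rewrite ?P0 //; lia.
Qed.

Theorem lemma6 (n K : nat) :
  (9 <= n)%N -> (2 * K <= n)%N ->
  forall x y : cube n,
    (@mxop n (@SenS n K) x y <= 3 * exp 20 * @mxop n (@SenN n (PK n K)) x y)%R.
Proof.
move=> _ Kn x y; have e21 := exp20_gt21; rewrite mxop_SenS.
have [-> | K0] := posnP K.
  rewrite PK0 mxop_SenN0 leqn0 hdist_eq0.
  case: eqP => [<- | _]; last by rewrite /= mulr0n mulr0.
  have /eqP-> : hdist x x == 0%N by rewrite hdist_eq0.
  by rewrite bin0 !invr1 mulr1 mulr1n; lra.
have [/andP[P0 P2] _ PN] := PK_bounds Kn K0; set P := PK n K in P0 P2 PN *.
rewrite mxop_SenN ?gt_eqF //; set d := hdist x y; set G := binom_tail n.+1 P d.+1.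
have C0 : 0 < 'C(n, d)%:R :> R by rewrite ltr0n bin_gt0 hdist_le.
have G0 : 0 <= G by rewrite binom_tail_ge0 // ltW //=; lra.
case: leqP => [dK | _]; last first.
  by rewrite mulr_ge0 ?divr_ge0 ?mulr_ge0 ?(ltW P0) ?(ltW C0) //; lra.
have G2 : 1 / 2 <= G := binom_tail_PK_ge_half Kn K0 dK.
rewrite invfM !mulrA ler_pM2r ?invr_gt0 //.
rewrite ler_pdivlMr ?mulr_gt0 ?ltr0Sn // mulrC ler_pdivrMr ?ltr0Sn //.
have : 30 * K.+1%:R <= 3 * (exp 20 * G) * K.+1%:R by rewrite ler_wpM2r //; nra.
have K0r : 0 <= K%:R :> R by apply: ler0n.
rewrite -[K.+1%:R]natr1; lra.
Qed.
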